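(* For every $q>1$ and every positive increasing sequence $\{M_j\}_{j\ge1}$ of real numbers, $$\liminf_{j\to\infty}\frac{j\,(M_j-M_{j-1})}{M_j^{\,q}}=0.$$ *)

From mathcomp Require Import all_boot all_order all_algebra.
From mathcomp Require Import all_classical all_reals all_analysis.
Set Implicit Arguments. Unset Strict Implicit. Unset Printing Implicit Defensive.
Import Order.TTheory GRing.Theory Num.Theory.
Local Open Scope ring_scope.

(* The sequence j (M_j - M_{j-1}) / M_j^q, as an extended-real sequence
   (its value at j = 0 is irrelevant for the liminf). *)
Definition lemma5p1_seq (R : realType) (q : R) (M : nat -> R) : nat -> \bar R :=
  fun j => ((j%:R * (M j - M j.-1)) / (M j `^ q))%:E.

From mathcomp Require Import all_boot all_order all_algebra.
From mathcomp Require Import all_classical all_reals all_analysis.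
From mathcomp Require Import ring lra.
Import Order.TTheory GRing.Theory Num.Theory.
Import numFieldNormedType.Exports.
Local Open Scope ring_scope.

(* Put s := q - 1.  Convexity of x |-> x ^ (-s) bounds the increment
   s (M_(i+1) - M_i) / M_(i+1) ^ q by M_i ^ (-s) - M_(i+1) ^ (-s).  If the
   terms j (M_j - M_(j-1)) / M_j ^ q stayed above eps > 0 from some index on,
   the harmonic series, scaled by s eps, would be dominated by this
   telescoping series of a positive sequence, hence would converge.  So the
   terms are frequently below every eps > 0, while they are eventually
   nonnegative because M is nondecreasing. *)

Section powR_tangent.
Context {R : realType}.

Lemma ln_div_ge {a b : R} : 0 < a -> 0 < b -> (b - a) / b <= ln (b / a).
Proof.
move=> a0 b0; have ab0 : 0 < a / b by rewrite divr_gt0.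
have := @le_ln1Dx R (a / b - 1) ltac:(lra).
rewrite addrC subrK -[b / a]invf_div lnV ?posrE//.
by rewrite mulrBl divff ?gt_eqF//; lra.
Qed.

(* The tangent-line inequality for the convex function x |-> x ^ (-s) at b. *)
Lemma powRN_sub_ge {s a b : R} : 0 <= s -> 0 < a -> 0 < b ->
  s * (b - a) / b `^ (s + 1) <= a `^ (- s) - b `^ (- s).
Proof.
move=> s0 a0 b0.
have bs0 : 0 < b `^ s by exact: powR_gt0.
have -> : a `^ (- s) = b `^ (- s) * expR (s * ln (b / a)).
  rewrite /powR !gt_eqF// -expRD ln_div ?posrE//; congr expR; ring.
have -> : b `^ (s + 1) = b `^ s * b.
  by rewrite -mulr_powRB1 ?addrK 1?mulrC// ?ltW// ltr_pwDr.
rewrite -{2}[b `^ (- s)]mulr1 -mulrBr powRN.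
have -> : s * (b - a) / (b `^ s * b) = (b `^ s)^-1 * (s * ((b - a) / b)).
  by field; rewrite !gt_eqF.
rewrite ler_pM2l ?invr_gt0//.
have exp_ge := expR_ge1Dx (s * ln (b / a)).
have ln_ge := ler_wpM2l s0 (ln_div_ge a0 b0).
lra.
Qed.
End powR_tangent.

Lemma series_le_telescope_cvg (R : realType) (u G : R ^nat) (N : nat) :
  (forall n, 0 <= u n) -> (forall n, 0 <= G n) ->
  (forall n, (N <= n)%N -> u n <= G n - G n.+1) -> cvgn (series u).
Proof.
move=> u_ge0 G_ge0 uG.
have u_nd : nondecreasing_seq (series u).
  by rewrite seriesEnat; apply: nondecreasing_series => n _ _; exact: u_ge0.
apply: nondecreasing_is_cvgn => //; exists (series u N + G N) => _ [m _ <-].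
have [mN|Nm] := leqP m N; first by rewrite (le_trans (u_nd _ _ mN)) ?lerDl.
rewrite -lerBlDl sub_series_geq 1?ltnW//.
have tele : \sum_(N <= k < m) (G k - G k.+1) = G N - G m.
  rewrite (@telescope_sumr_eq _ _ _ (fun k => - G k)) 1?ltnW// => [|k _];
  by rewrite opprK addrC.
apply: le_trans (ler_sum_nat _) _ => [k /andP[Nk _]|]; first exact: uG.
by rewrite tele gerBl.
Qed.

Lemma frequently_small_increment {R : realType} {q : R} {M : nat -> R} :
    1 < q -> (forall j, (1 <= j)%N -> 0 < M j) ->
  forall eps : R, 0 < eps -> forall n,
  exists2 k, (n <= k)%N & k%:R * (M k - M k.-1) / M k `^ q <= eps.
Proof.
move=> q1 M_gt0 eps eps0 n; apply: contrapT => small.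
have big k : (n <= k)%N -> eps < k%:R * (M k - M k.-1) / M k `^ q.
  by move=> nk; rewrite ltNge; apply/negP => ?; apply: small; exists k.
pose s := q - 1; have s0 : 0 < s by rewrite subr_gt0.
pose G i := M i `^ (- s) / (s * eps).
apply: (@dvg_harmonic R); apply: (@series_le_telescope_cvg _ _ G n.+1).
- exact: harmonic_ge0.
- by move=> i; rewrite divr_ge0 ?powR_ge0 ?mulr_ge0 ?ltW.
move=> i ni; have Mi0 : 0 < M i by apply: M_gt0; apply: leq_trans ni.
have Mi1 : 0 < M i.+1 by exact: M_gt0.
have := powRN_sub_ge (ltW s0) Mi0 Mi1.
have := big i.+1 (leqW (ltnW ni)); rewrite subrK /= /G -mulrBl.
set d := M i.+1 - M i; set P := M i.+1 `^ q => epsd dG.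
have P0 : 0 < P by exact: powR_gt0.
rewrite ler_pdivlMr ?mulr_gt0//; apply: le_trans dG.
have -> : s * d / P = s * (i.+1%:R^-1 * (i.+1%:R * d / P)).
  by field; rewrite !gt_eqF.
by rewrite mulrCA ler_pM2l// ler_pM2l ?invr_gt0// ltW.
Qed.

Section limn_einf_bounds.
Context {R : realType}.
Local Open Scope classical_set_scope.
Local Open Scope ereal_scope.

Lemma limn_einf_le (u : (\bar R)^nat) (l : \bar R) :
    (forall e, (0 < e)%R -> forall n, exists2 k, (n <= k)%N & u k <= l + e%:E) ->
  limn_einf u <= l.
Proof.
move=> freq; rewrite limn_einf_lim; apply: lime_le; first exact: is_cvg_einfs.
apply: nearW => n; apply/lee_addgt0Pr => e e0.
have [k nk ukl] := freq e e0 n.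
by apply: ge_ereal_inf; exists (u k) => //; exists k.
Qed.

Lemma limn_einf_ge (u : (\bar R)^nat) (l : \bar R) :
  (\forall n \near \oo, l <= u n) -> l <= limn_einf u.
Proof.
move=> [N _ lu]; rewrite limn_einf_lim; apply: lime_ge; first exact: is_cvg_einfs.
exists N => // n /= Nn; apply: le_ereal_inf_tmp => _ [k /= nk <-].
by apply: lu; exact: leq_trans nk.
Qed.

End limn_einf_bounds.

Theorem lemma5p1 (R : realType) (q : R) (M : nat -> R)
  (hq : 1 < q)
  (hpos : forall j, (1 <= j)%N -> 0 < M j)
  (hincr : forall j, (1 <= j)%N -> M j <= M j.+1) :
  limn_einf (lemma5p1_seq q M) = 0%E.
Proof.
apply/eqP; rewrite eq_le; apply/andP; split.
  apply: limn_einf_le => e e0 n.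
  have [k nk small] := frequently_small_increment hq hpos e e0 n.
  by exists k; rewrite // add0e lee_fin.
apply: limn_einf_ge; exists 2%N => // k /= k2.
rewrite lee_fin divr_ge0 ?powR_ge0// mulr_ge0// subr_ge0.
by case: k k2 => // k k1; exact: hincr.
Qed.
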